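(* Consider the APT–DIFT game described in the context and suppose the information flow graph $\mathcal G$ is acyclic, with $N$ nodes. Then, under any strategy pair $(p_A,p_D)$, the state space of the APT–DIFT game is acyclic (the directed graph on $\mathbf S$ having an edge $s\to s'$ whenever $P(s,a,d,s')>0$ for some $a\in\mathcal A_A(s)$, $d\in\mathcal A_D(s)$ has no directed cycle), and the game terminates in at most $N+4$ steps, i.e. $T\le N+4$.
   Context: Let $\mathcal G=(V_{\mathcal G},E_{\mathcal G})$ be a finite directed graph (the information flow graph) with $V_{\mathcal G}=\{v_1,\dots,v_N\}$, let $\lambda\subset V_{\mathcal G}$ be a set of entry points and $\mathcal D=\{v_1,\dots,v_q\}\subset V_{\mathcal G}$ a destination set, $FN,FP:V_{\mathcal G}\to(0,1)$ and $\beta>0$. The APT–DIFT game is a two-player stochastic game with state space $\mathbf S=\{v_0,v_1,\dots,v_N,\phi,\tau_A,\tau_B\}$ and initial state $v_0$; the states in $\{\phi,\tau_A,\tau_B\}\cup\mathcal D$ are absorbing with empty action sets, and the game terminates (at time $T$) when an absorbing state is reached. At $v_0$: $\mathcal A_A(v_0)=\lambda$, $\mathcal A_D(v_0)=\{0\}$. At a non-absorbing $s=v_i\in V_{\mathcal G}$: $\mathcal A_A(s)=\{\phi\}\cup\{v_j:(v_i,v_j)\in E_{\mathcal G}\}$, $\mathcal A_D(s)=\{0\}\cup\{v_j:(v_i,v_j)\in E_{\mathcal G}\}$. Transition probabilities $P(s,a,d,s')$: if $d=0$, $s'=a$ with probability $1$; if $d=a$, $s'=a$ with probability $FN(d)$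 and $s'=\tau_A$ with probability $1-FN(d)$; if $d\ne0$ and $d\neq a$, $s'=\tau_B$ with probability $FP(d)$ and $s'=a$ with probability $1-FP(d)$. Strategies are stationary mixed strategies assigning to each non-absorbing state a distribution over the player's actions there. *)

From HB Require Import structures.
From mathcomp Require Import all_boot all_order all_algebra.
Set Implicit Arguments. Unset Strict Implicit. Unset Printing Implicit Defensive.
Import Order.TTheory GRing.Theory Num.Theory.
Local Open Scope ring_scope.

Inductive state (V : finType) : Type :=
  | Init | Node of V | Phi | TauA | TauB.
Arguments Init {V}. Arguments Phi {V}. Arguments TauA {V}. Arguments TauB {V}.

Section StateFin.
Variable V : finType.
Definition state_enc (s : state V) : option (V + 'I_4) :=
  match s with
  | Init => None
  | Node v => Some (inl v)
  | Phi => Some (inr (@Ordinal 4 0 isT))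
  | TauA => Some (inr (@Ordinal 4 1 isT))
  | TauB => Some (inr (@Ordinal 4 2 isT))
  end.
Definition state_dec (x : option (V + 'I_4)) : option (state V) :=
  match x with
  | None => Some Init
  | Some (inl v) => Some (Node v)
  | Some (inr i) =>
      match val i with 0 => Some Phi | 1 => Some TauA | 2 => Some TauB | _ => None end
  end.
Lemma state_encK : pcancel state_enc state_dec. Proof. by case. Qed.
HB.instance Definition _ := Finite.copy (state V) (pcan_type state_encK).
End StateFin.

(* Attacker actions: None = phi (drop out), Some v = move to v.
   Defender actions: None = 0 (no trap), Some v = trap on v. *)
Section Game.
Variables (R : realFieldType) (V : finType) (E : rel V)
          (lambda D : {set V}) (FN FP : V -> R).

Definition absorbing (s : state V) : bool :=
  match s with
  | Init => false
  | Node v => v \in D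
  | _ => true
  end.

Definition AA (s : state V) : {set option V} :=
  match s with
  | Init => [set Some v | v in lambda]
  | Node v => if v \in D then set0 else None |: [set Some w | w in [set w | E v w]]
  | _ => set0
  end.

Definition AD (s : state V) : {set option V} :=
  match s with
  | Init => [set None]
  | Node v => if v \in D then set0 else None |: [set Some w | w in [set w | E v w]]
  | _ => set0
  end.

Definition act_target (a : option V) : state V :=
  match a with None => Phi | Some v => Node v end.

Definition trans (s : state V) (a d : option V) (s' : state V) : R :=
  match d with
  | None => (s' == act_target a)%:R
  | Some w =>
      if d == a then
        (s' == act_target a)%:R * FN w + (s' == TauA)%:R * (1 - FN w)
      else
        (s' == TauB)%:R * FP w + (s' == act_target a)%:R * (1 - FP w)
  end.

Definition sedge (s s' : state V) : bool :=
  [exists a, exists d, [&& a \in AA s, d \in AD s & 0 < trans s a d s']].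

Definition strategy (A : state V -> {set option V}) (p : state V -> option V -> R) :=
  forall s, ~~ absorbing s ->
    [/\ forall a, 0 <= p s a,
        forall a, a \notin A s -> p s a = 0
      & \sum_(a in A s) p s a = 1].

(* one-step transition kernel of the game under (pA, pD); absorbing states
   stay put (the game has terminated) *)
Definition step (pA pD : state V -> option V -> R) (s s' : state V) : R :=
  if absorbing s then (s == s')%:R
  else \sum_a \sum_d pA s a * pD s d * trans s a d s'.

Fixpoint dist (pA pD : state V -> option V -> R) (n : nat) (s' : state V) : R :=
  match n with
  | 0 => (s' == Init)%:R
  | n.+1 => \sum_s dist pA pD n s * step pA pD s s'
  end.
End Game.

Definition acyclic (T : finType) (e : rel T) : Prop :=
  forall (x : T) (p : seq T), p != [::] -> path e x p -> last x p != x.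

From HB Require Import structures.
From mathcomp Require Import all_boot all_order all_algebra.
Import Order.TTheory GRing.Theory Num.Theory.
Set Implicit Arguments. Unset Strict Implicit. Unset Printing Implicit Defensive.
Local Open Scope ring_scope.

(* A transition of positive probability into a non-absorbing state always lands
   on the node the attacker moved to, so apart from its absorbing sinks the state
   graph is G with the extra source v0 attached to the entry points; hence it is
   acyclic.  Every transition of the step kernel under (pA, pD) is an edge of this
   graph, so a state that is still non-absorbing at time n ends a path of n edges
   from v0.  By acyclicity such a path visits n + 1 distinct states among the
   N + 4 states of S, whence n < N + 4. *)

Section AcyclicPaths.
Variables (T : finType) (e : rel T).
Hypothesis e_acyclic : acyclic e.

Lemma acyclic_path_uniq x p : path e x p -> uniq (x :: p).
Proof.
elim: p x => [|y p IHp] x // /[dup] exyp /andP[_ ep].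
rewrite cons_uniq IHp // andbT; apply/negP=> x_in.
move: exyp; case/splitPr: x_in => [p1 p2]; rewrite cat_path /= => /and3P[ep1 ep1x _].
have := @e_acyclic x (rcons p1 x).
by rewrite -size_eq0 size_rcons rcons_path ep1 ep1x last_rcons eqxx => /(_ isT isT).
Qed.

Lemma acyclic_path_size x p : path e x p -> (size p < #|T|)%N.
Proof. by move=> /acyclic_path_uniq/card_uniqP /= <-; apply: max_card. Qed.
End AcyclicPaths.

Lemma sumr_neq0_exists (M : nmodType) (I : finType) (F : I -> M) :
  \sum_i F i != 0 -> exists i, F i != 0.
Proof.
have [i Fi_neq0 _|allF0] := pickP (fun i => F i != 0); first by exists i.
by rewrite big1 ?eqxx // => i _; apply/eqP/negbFE/allF0.
Qed.

Section CardState.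
Variable V : finType.

Definition state_of_code (x : option (V + 'I_3)) : state V :=
  match x with
  | None => Init
  | Some (inl v) => Node v
  | Some (inr i) => match val i with 0 => Phi | 1 => TauA | _ => TauB end
  end.

Definition code_of_state (s : state V) : option (V + 'I_3) :=
  match s with
  | Init => None
  | Node v => Some (inl v)
  | Phi => Some (inr (inord 0))
  | TauA => Some (inr (inord 1))
  | TauB => Some (inr (inord 2))
  end.

Lemma card_state : #|{: state V}| = (#|V| + 4)%N.
Proof.
have codeK : cancel code_of_state state_of_code by case=> //= *; rewrite inordK.
have stateK : cancel state_of_code code_of_state.
  case=> [[v|[[|[|[|i]]] ltn3]]|] //=; congr (Some (inr _)); exact/val_inj/inordK.
by rewrite -(bij_eq_card (Bijective stateK codeK)) card_option card_sum card_ord !addnS.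
Qed.
End CardState.

Section StateGraph.
Variables (R : realFieldType) (V : finType) (E : rel V) (lambda D : {set V}) (FN FP : V -> R).

Local Notation absorbing := (absorbing D).
Local Notation AA := (AA E lambda D).
Local Notation trans := (trans FN FP).
Local Notation sedge := (sedge E lambda D FN FP).

Lemma trans_eq0 s a d s' :
  s' != act_target a -> ~~ absorbing s' -> trans s a d s' = 0.
Proof.
move=> /negbTE s'_a; case: s' s'_a => //= [|v] s'_a _;
  by case: d => [w|]; rewrite /trans s'_a //; case: ifP; rewrite ?mul0r ?addr0.
Qed.

Lemma AA_Node v w : (Some w \in AA (Node v)) = (v \notin D) && E v w.
Proof.
rewrite /=; case: (v \in D); first by rewrite inE.
by rewrite !inE (mem_imset _ _ (@Some_inj _)) inE.
Qed.

Lemma sedge_source s s' : sedge s s' -> ~~ absorbing s.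
Proof.
case/existsP=> a /existsP[d /and3P[+ _ _]].
by case: s => //= [v|||]; rewrite ?inE //; case: (v \in D); rewrite ?inE.
Qed.

Lemma sedge_to_nonabsorbing s s' :
  sedge s s' -> ~~ absorbing s' -> exists2 w, s' = Node w & Some w \in AA s.
Proof.
case/existsP=> a /existsP[d /and3P[aA _ trans_gt0]] s'_na.
have s'_a : s' = act_target a.
  by apply/eqP; apply: contraTT trans_gt0 => /trans_eq0 -> //; rewrite ltxx.
by case: a aA s'_a {trans_gt0} => [w|] aA s'_a; [exists w | rewrite s'_a in s'_na].
Qed.

Lemma sedge_Init s : ~~ sedge s Init.
Proof. by apply/negP=> /sedge_to_nonabsorbing /(_ isT) []. Qed.

Lemma sedge_path_Node v p :
  path sedge (Node v) p -> ~~ absorbing (last (Node v) p) ->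
  exists2 q, path E v q & p = map (@Node V) q.
Proof.
elim: p v => [|y p IHp] v /=; first by exists [::].
case/andP=> vy yp last_na.
have y_na : ~~ absorbing y by case: p yp last_na {IHp} => [|z p] //= /andP[/sedge_source].
have [w def_y vw] := sedge_to_nonabsorbing vy y_na; subst y.
have [q wq ->] := IHp w yp last_na.
by exists (w :: q) => //=; rewrite wq andbT; move: vw; rewrite AA_Node => /andP[].
Qed.

Lemma sedge_acyclic : acyclic E -> acyclic sedge.
Proof.
move=> E_acyclic x [//|y p] _ xyp; apply/eqP=> last_x.
have x_na : ~~ absorbing x by case/andP: xyp => /sedge_source.
case: x x_na xyp last_x => [|v|||] // x_na.
- rewrite lastI rcons_path last_rcons => /andP[_ last_edge] last_Init.
  by move: last_edge; rewrite last_Init (negbTE (sedge_Init _)).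
- move=> vp last_v; have := sedge_path_Node vp; rewrite last_v => /(_ x_na)[q vq def_yp].
  have q_neq0 : q != [::] by case: q vq def_yp.
  move: last_v; rewrite def_yp last_map => -[last_q].
  by move: (E_acyclic v q q_neq0 vq); rewrite last_q eqxx.
Qed.

Lemma strategy_support (A : state V -> {set option V}) (p : state V -> option V -> R) s a :
  strategy D A p -> ~~ absorbing s -> p s a != 0 -> a \in A s.
Proof. by move=> /(_ s) p_strategy /p_strategy[_ p_out _]; apply: contraNT => /p_out ->. Qed.

Variables pA pD : state V -> option V -> R.
Hypotheses (FN01 : forall v, 0 <= FN v <= 1) (FP01 : forall v, 0 <= FP v <= 1).
Hypotheses (pA_strategy : strategy D AA pA) (pD_strategy : strategy D (AD E D) pD).

Local Notation step := (step D FN FP pA pD).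
Local Notation dist := (dist D FN FP pA pD).

Lemma trans_ge0 s a d s' : 0 <= trans s a d s'.
Proof.
rewrite /trans; case: d => [w|]; last exact: ler0n.
have [/andP[FN0 FN1] /andP[FP0 FP1]] := (FN01 w, FP01 w).
by case: ifP => _; apply: addr_ge0; apply: mulr_ge0; rewrite ?ler0n ?subr_ge0.
Qed.

Lemma step_support s s' : ~~ absorbing s -> step s s' != 0 -> sedge s s'.
Proof.
move=> s_na; rewrite /step (negbTE s_na); apply: contraNT => no_edge.
rewrite big1 // => a _; rewrite big1 // => d _.
have [pA0|/(strategy_support pA_strategy s_na) aA] := eqVneq (pA s a) 0.
  by rewrite pA0 !mul0r.
have [pD0|/(strategy_support pD_strategy s_na) dD] := eqVneq (pD s d) 0.
  by rewrite pD0 mulr0 mul0r.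
move/existsPn: no_edge => /(_ a) /existsPn /(_ d); rewrite aA dD /= -leNgt => trans_le0.
have -> : trans s a d s' = 0 by apply/le_anti; rewrite trans_le0 trans_ge0.
by rewrite mulr0.
Qed.

Lemma dist_support n s :
  ~~ absorbing s -> dist n s != 0 ->
  exists p, [/\ path sedge Init p, last Init p = s & size p = n].
Proof.
elim: n s => [|n IHn] s' s'_na /=.
  by have [->|_] := eqVneq s' Init; [exists [::] | rewrite eqxx].
case/sumr_neq0_exists=> s; rewrite mulf_eq0 negb_or => /andP[dist_neq0 step_neq0].
have s_na : ~~ absorbing s.
  apply: contra step_neq0 => s_abs; rewrite /step s_abs.
  by have [s_s'|_] := eqVneq s s'; [rewrite -s_s' s_abs in s'_na | rewrite eqxx].
have [p [Ip last_p size_p]] := IHn s s_na dist_neq0.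
exists (rcons p s'); split; last by rewrite size_rcons size_p.
- by rewrite rcons_path Ip last_p step_support.
- by rewrite last_rcons.
Qed.

End StateGraph.

Theorem theorem4 (R : realFieldType) (V : finType) (E : rel V)
  (lambda D : {set V}) (FN FP : V -> R) (beta : R) :
  (forall v, 0 < FN v < 1) -> (forall v, 0 < FP v < 1) -> 0 < beta ->
  acyclic E ->
  forall pA pD : state V -> option V -> R,
    strategy D (AA E lambda D) pA -> strategy D (AD E D) pD ->
    acyclic (sedge E lambda D FN FP) /\
    (* P(T > N+4) = 0: with probability one an absorbing state has been
       reached by time N + 4, where N = #|V| *)
    (forall s, ~~ absorbing D s -> dist D FN FP pA pD (#|V| + 4) s = 0).
Proof.
move=> FN_01 FP_01 _ E_acyclic pA pD pA_strategy pD_strategy.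
have le01 (x : R) : 0 < x < 1 -> 0 <= x <= 1 by case/andP=> /ltW -> /ltW ->.
have S_acyclic : acyclic (sedge E lambda D FN FP) by exact: sedge_acyclic.
split=> // s s_na; apply/eqP; apply: contraT => dist_neq0.
have [p [Ip _ size_p]] := dist_support (fun v => le01 _ (FN_01 v))
  (fun v => le01 _ (FP_01 v)) pA_strategy pD_strategy s_na dist_neq0.
by have := acyclic_path_size S_acyclic Ip; rewrite size_p card_state ltnn.
Qed.
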